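(* Let $K_c=\operatorname{conv}\big(\mathbb{S}^{d-1}\cup\{\boldsymbol v_i\mid i\in I\}\big)\subset\mathbb{E}^d$ be a cap body and let $i\in I$. A direction $\boldsymbol u\in\mathbb{S}^{d-1}$ illuminates the vertex $\boldsymbol v_i$ of $K_c$ if and only if $\langle\boldsymbol v_i,\boldsymbol u\rangle<-\sqrt{\|\boldsymbol v_i\|^2-1}$.
   Context: $\mathbb{S}^{d-1}$ is the unit sphere centred at the origin and $B^d$ the closed unit ball. A cap body is $\operatorname{conv}(\mathbb{S}^{d-1}\cup\{\boldsymbol v_i\mid i\in I\})$ where $\{\boldsymbol v_i\}$ is a countable subset of $\mathbb{E}^d\setminus B^d$ such that for distinct $i,j$ the segment $\overline{\boldsymbol v_i\boldsymbol v_j}$ intersects $B^d$; the points $\boldsymbol v_i$ are its vertices. A direction $\boldsymbol u\in\mathbb{S}^{d-1}$ illuminates a boundary point $\boldsymbol p$ of a convex body $K$ if $\boldsymbol p+\lambda\boldsymbol u$ is in the interior of $K$ for some $\lambda>0$. *)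

From HB Require Import structures.
From mathcomp Require Import all_boot all_order all_algebra.
From mathcomp Require Import reals.
Set Implicit Arguments. Unset Strict Implicit. Unset Printing Implicit Defensive.
Import Order.TTheory GRing.Theory Num.Theory.
Local Open Scope ring_scope.

Section Defs.
Variables (R : realType) (d : nat).
Local Notation vec := 'rV[R]_d.

Definition dotp (x y : vec) : R := \sum_(j < d) x ord0 j * y ord0 j.
Definition enorm (x : vec) : R := Num.sqrt (dotp x x).

Definition sphere (x : vec) : Prop := enorm x = 1.
Definition ball1 (x : vec) : Prop := enorm x <= 1.

Definition conv (A : vec -> Prop) (x : vec) : Prop :=
  exists (n : nat) (w : 'I_n -> R) (p : 'I_n -> vec),
    (forall k, 0 <= w k) /\ \sum_(k < n) w k = 1 /\
    (forall k, A (p k)) /\ x = \sum_(k < n) w k *: p k.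

Definition interior (K : vec -> Prop) (p : vec) : Prop :=
  exists2 e : R, 0 < e & forall y : vec, enorm (y - p) < e -> K y.

Definition illuminates (K : vec -> Prop) (p u : vec) : Prop :=
  exists2 lam : R, 0 < lam & interior K (p + lam *: u).

Definition segment (a b x : vec) : Prop :=
  exists2 t : R, 0 <= t <= 1 & x = (1 - t) *: a + t *: b.

Definition cap_vertices (I : countType) (v : I -> vec) : Prop :=
  (forall i, ~ ball1 (v i)) /\
  (forall i j, i <> j -> exists x, segment (v i) (v j) x /\ ball1 x).

Definition cap_body (I : countType) (v : I -> vec) : vec -> Prop :=
  conv (fun x => sphere x \/ exists i, x = v i).
End Defs.

(* If [<v, u>] is at least [-sqrt(|v|^2 - 1)], the cap body lies in a
   half-space [<x, m> <= <v, m>] whose normal [m] makes a non-obtuse angle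
   with [u] (take [m = v] when [<v, u> >= 0], and otherwise the component of
   [v] orthogonal to [u]): the half-space contains the unit ball, and no other
   vertex can lie beyond it because its segment to [v] meets the ball.  Then
   [v + lam u] stays on the boundary side for every [lam > 0].  Conversely,
   if [<v, u> < -sqrt(|v|^2 - 1)], the point [q = v - <v, u> u] lies in the
   open unit ball, so [v + lam u] with [lam = -<v, u>/2] is the midpoint of
   [v] and [q]; a neighbourhood of it consists of midpoints of [v] and points
   of the ball, which are convex combinations of [v] and two points of the
   sphere. *)
From mathcomp Require Import all_boot all_order all_algebra.
From mathcomp Require Import reals.
From mathcomp Require Import ring lra.
Import Order.TTheory GRing.Theory Num.Theory.
Set Implicit Arguments. Unset Strict Implicit.
Local Open Scope ring_scope.

Section EuclideanSpace.
Variables (R : realType) (d : nat).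
Local Notation vec := 'rV[R]_d.

Lemma dotpC (x y : vec) : dotp x y = dotp y x.
Proof. by apply: eq_bigr => j _; rewrite mulrC. Qed.

Lemma dotpDl (x y z : vec) : dotp (x + y) z = dotp x z + dotp y z.
Proof. by rewrite /dotp -big_split; apply: eq_bigr => j _; rewrite !mxE mulrDl. Qed.

Lemma dotpZl (a : R) (x z : vec) : dotp (a *: x) z = a * dotp x z.
Proof. by rewrite /dotp mulr_sumr; apply: eq_bigr => j _; rewrite !mxE mulrA. Qed.

Lemma dotpNl (x z : vec) : dotp (- x) z = - dotp x z.
Proof. by rewrite -scaleN1r dotpZl mulN1r. Qed.

Lemma dotpDr (x y z : vec) : dotp z (x + y) = dotp z x + dotp z y.
Proof. by rewrite !(dotpC z) dotpDl. Qed.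

Lemma dotpZr (a : R) (x z : vec) : dotp z (a *: x) = a * dotp z x.
Proof. by rewrite !(dotpC z) dotpZl. Qed.

Lemma dotpNr (x z : vec) : dotp z (- x) = - dotp z x.
Proof. by rewrite !(dotpC z) dotpNl. Qed.

Definition dotpE := (dotpDl, dotpNl, dotpZl, dotpDr, dotpNr, dotpZr).

Lemma dotp_suml n (w : 'I_n -> R) (p : 'I_n -> vec) (z : vec) :
  dotp (\sum_(k < n) w k *: p k) z = \sum_(k < n) w k * dotp (p k) z.
Proof.
rewrite /dotp; under eq_bigr => j _ do rewrite summxE mulr_suml.
rewrite exchange_big; apply: eq_bigr => k _; rewrite mulr_sumr.
by apply: eq_bigr => j _; rewrite !mxE mulrA.
Qed.

Lemma dotp_ge0 (x : vec) : 0 <= dotp x x.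
Proof. by apply: sumr_ge0 => j _; rewrite -expr2 sqr_ge0. Qed.

Lemma dotp_self_eq0 (x : vec) : dotp x x = 0 -> x = 0.
Proof.
move=> /psumr_eq0P x0; apply/matrixP => i j; rewrite (ord1 i) mxE.
by apply/eqP; rewrite -sqrf_eq0 expr2 x0 //; move=> k _; rewrite -expr2 sqr_ge0.
Qed.

Lemma enorm_ge0 (x : vec) : 0 <= enorm x.
Proof. exact: sqrtr_ge0. Qed.

Lemma sqr_enorm (x : vec) : enorm x ^+ 2 = dotp x x.
Proof. by rewrite sqr_sqrtr // dotp_ge0. Qed.

Lemma cauchy_schwarz (x y : vec) : dotp x y ^+ 2 <= dotp x x * dotp y y.
Proof.
have [/dotp_self_eq0 ->|y_neq0] := eqVneq (dotp y y) 0.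
  by rewrite -[0 : vec](scale0r 0) !dotpZr !dotpZl !mul0r expr2 !mulr0.
have y_gt0 : 0 < dotp y y by rewrite lt0r y_neq0 dotp_ge0.
have := dotp_ge0 (dotp y y *: x - dotp x y *: y).
rewrite !dotpE (dotpC y x); nra.
Qed.

Lemma dotp_le_enorm (x y : vec) : dotp x y <= enorm x * enorm y.
Proof.
have [xy_le0|xy_gt0] := lerP (dotp x y) 0.
  by rewrite (le_trans xy_le0) ?mulr_ge0 ?enorm_ge0.
rewrite -(@ler_pXn2r _ 2) ?nnegrE ?(ltW xy_gt0) ?mulr_ge0 ?enorm_ge0 //.
by rewrite exprMn !sqr_enorm cauchy_schwarz.
Qed.

Lemma enormZ (a : R) (x : vec) : enorm (a *: x) = `|a| * enorm x.
Proof. by rewrite /enorm !dotpE mulrA -expr2 sqrtrM ?sqr_ge0 // sqrtr_sqr. Qed.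

Lemma ler_enormD (x y : vec) : enorm (x + y) <= enorm x + enorm y.
Proof.
have := dotp_le_enorm x y; have := enorm_ge0 (x + y).
have := enorm_ge0 x; have := enorm_ge0 y.
have := sqr_enorm (x + y); rewrite !dotpE (dotpC y x) -!sqr_enorm; nra.
Qed.

Lemma sphereE (x : vec) : sphere x <-> dotp x x = 1.
Proof.
split=> x1; first by rewrite -sqr_enorm x1 expr1n.
by rewrite /sphere /enorm x1 sqrtr1.
Qed.

Lemma ball1E (x : vec) : ball1 x <-> dotp x x <= 1.
Proof. by rewrite /ball1 /enorm -{1}sqrtr1 ler_sqrt. Qed.

Lemma conv3 (A : vec -> Prop) (p0 p1 p2 : vec) (w0 w1 w2 : R) :
  A p0 -> A p1 -> A p2 -> 0 <= w0 -> 0 <= w1 -> 0 <= w2 -> w0 + w1 + w2 = 1 ->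
  conv A (w0 *: p0 + w1 *: p1 + w2 *: p2).
Proof.
move=> A0 A1 A2 w0_ge0 w1_ge0 w2_ge0 w_sum.
exists 3, (fun k => [:: w0; w1; w2]`_k), (fun k => nth 0 [:: p0; p1; p2] k).
rewrite !big_ord_recl !big_ord0 /= !addr0 !addrA.
by do !split=> //; case=> [[|[|[]]]].
Qed.

Lemma conv_le_dotp (A : vec -> Prop) (m : vec) (k : R) (x : vec) :
  (forall y, A y -> dotp y m <= k) -> conv A x -> dotp x m <= k.
Proof.
move=> Ak [n [w [p [w_ge0 [w_sum [Ap ->]]]]]].
rewrite dotp_suml -[k]mul1r -w_sum mulr_suml.
by apply: ler_sum => j _; apply: ler_wpM2l; [exact: w_ge0 | exact: Ak].
Qed.

(* The chord through [b] in direction [u] meets the sphere at [b + r_± u],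
   where [r_±] are the roots of [r^2 + 2 <b, u> r + |b|^2 - 1]. *)
Lemma ball1_on_chord (u b : vec) : sphere u -> ball1 b ->
  exists a1 a2 t, [/\ 0 <= t <= 1, sphere a1, sphere a2 &
                      b = t *: a1 + (1 - t) *: a2].
Proof.
move=> /sphereE u1 /ball1E b1; set c := dotp b u.
set D := c ^+ 2 + 1 - dotp b b.
have D_ge0 : 0 <= D by rewrite /D; nra.
have [D0|D_gt0] := eqVneq D 0.
  have b_sphere : dotp b b = 1 by have := sqr_ge0 c; rewrite /D in D0; nra.
  exists b, b, 1; split; rewrite ?lexx ?ler01 ?subrr ?scale0r ?addr0 ?scale1r //;
    exact/sphereE.
set s := Num.sqrt D.
have s2 : s ^+ 2 = c ^+ 2 + 1 - dotp b b by rewrite sqr_sqrtr.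
have s_gt0 : 0 < s by rewrite sqrtr_gt0 lt0r D_gt0.
have c2_le_s2 : c ^+ 2 <= s ^+ 2 by rewrite s2; nra.
exists (b + (- c + s) *: u), (b + (- c - s) *: u), ((c + s) / (2 * s)).
split.
- by rewrite divr_ge0 ?ler_pdivrMr /=; nra.
- by apply/sphereE; rewrite !dotpE u1 (dotpC u b) -/c; nra.
- by apply/sphereE; rewrite !dotpE u1 (dotpC u b) -/c; nra.
- by apply/matrixP => i j; rewrite !mxE; field; exact: lt0r_neq0.
Qed.

Lemma sqr_enorm_orthogonal (u w : vec) : sphere u ->
  enorm (w - dotp w u *: u) ^+ 2 = enorm w ^+ 2 - dotp w u ^+ 2.
Proof. by move=> /sphereE u1; rewrite !sqr_enorm !dotpE u1 (dotpC u w); ring. Qed.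

Lemma ltr_Nsqrt (a c : R) : 0 <= a -> (c < - Num.sqrt a) = (c < 0) && (a < c ^+ 2).
Proof.
move=> a_ge0; have s_ge0 := sqrtr_ge0 a; have s2 := sqr_sqrtr a_ge0.
by apply/idP/andP => [c_lt|[c_lt0 a_lt]]; [split|]; nra.
Qed.

Lemma supporting_normal (u w : vec) :
  sphere u -> 1 < enorm w -> - Num.sqrt (enorm w ^+ 2 - 1) <= dotp w u ->
  exists m, [/\ 0 < dotp m m, enorm m <= dotp w m & 0 <= dotp u m].
Proof.
move=> u1 w_gt1; set c := dotp w u.
rewrite leNgt ltr_Nsqrt; last by nra.
have [c_ge0 _|c_lt0 /= c2_le] := lerP 0 c.
  exists w; rewrite -sqr_enorm dotpC; split=> //; nra.
set m := w - c *: u.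
have m2 := sqr_enorm_orthogonal w u1; rewrite -/c -/m in m2.
have m_ge1 : 1 <= enorm m ^+ 2 by rewrite m2; lra.
have um0 : dotp u m = 0.
  by move/sphereE: u1 => u1; rewrite !dotpE u1 (dotpC u w) -/c mulr1 subrr.
have wm : dotp w m = enorm m ^+ 2 by rewrite m2 sqr_enorm !dotpE -/c expr2.
have m_ge0 := enorm_ge0 m.
by exists m; rewrite -sqr_enorm wm um0; split=> //; nra.
Qed.

Lemma not_illuminates_halfspace (K : vec -> Prop) (p u m : vec) :
  (forall x, K x -> dotp x m <= dotp p m) -> 0 < dotp m m -> 0 <= dotp u m ->
  ~ illuminates K p u.
Proof.
move=> K_le m_gt0 um_ge0 [lam lam_gt0 [e e_gt0 K_near]].
have m_ge0 := enorm_ge0 m.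
set del := e / (enorm m + 1).
have del_gt0 : 0 < del by rewrite divr_gt0 //; lra.
have /K_le : K (p + lam *: u + del *: m).
  apply: K_near; rewrite [_ + del *: m]addrC addrK enormZ gtr0_norm //.
  by rewrite mulrAC ltr_pdivrMr; nra.
by rewrite !dotpE; nra.
Qed.

Lemma interior_conv_midpoint (A : vec -> Prop) (u w q : vec) :
  A w -> (forall x, sphere x -> A x) -> sphere u -> enorm q < 1 ->
  interior (conv A) (2^-1 *: (w + q)).
Proof.
move=> Aw A_sphere u1 q_lt1.
exists ((1 - enorm q) / 2) => [|y y_near]; first lra.
set b := 2 *: y - w.
have b_ball : ball1 b.
  have -> : b = q + 2 *: (y - 2^-1 *: (w + q)).
    by apply/matrixP => i j; rewrite !mxE; field.
  rewrite /ball1 (le_trans (ler_enormD _ _)) // enormZ ger0_norm //; lra.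
have [a1 [a2 [t [/andP[t_ge0 t_le1] a1_sphere a2_sphere b_chord]]]] :=
  ball1_on_chord u1 b_ball.
have -> : y = 2^-1 *: w + (2^-1 * t) *: a1 + (2^-1 * (1 - t)) *: a2.
  apply/matrixP => i j; have := congr1 (fun M : vec => M i j) b_chord.
  by rewrite !mxE; lra.
by apply: conv3 => //; try exact: A_sphere; lra.
Qed.

End EuclideanSpace.

Section CapBody.
Variables (R : realType) (d : nat) (I : countType) (v : I -> 'rV[R]_d).
Hypothesis v_cap : cap_vertices v.

(* The segment from [v i] to [v j] meets the unit ball, which lies below the
   half-space boundary, so [v j] cannot lie strictly above it. *)
Lemma cap_body_le_dotp (i : I) (m : 'rV[R]_d) :
  enorm m <= dotp (v i) m -> forall x, cap_body v x -> dotp x m <= dotp (v i) m.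
Proof.
move=> m_le x; apply: conv_le_dotp => y [y_sphere|[j ->]].
  by rewrite (le_trans (dotp_le_enorm y m)) // y_sphere mul1r.
have [<- //|i_neq_j] := eqVneq i j.
have [b [[t /andP[t_ge0 t_le1] b_def] b_ball]] :=
  v_cap.2 i j (elimN eqP i_neq_j).
have b_le : dotp b m <= dotp (v i) m.
  rewrite (le_trans (dotp_le_enorm b m)) // (le_trans _ m_le) //.
  by rewrite ler_piMl ?enorm_ge0.
have t_gt0 : 0 < t.
  rewrite lt0r t_ge0 andbT; apply: contra_notN (v_cap.1 i) => /eqP t0.
  by rewrite b_def t0 subr0 scale1r scale0r addr0 in b_ball.
rewrite leNgt; apply/negP => vj_gt.
by move: b_le; rewrite b_def !dotpE; nra.
Qed.

End CapBody.

Theorem lemma1 (R : realType) (d : nat) (I : countType) (v : I -> 'rV[R]_d)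
  (Hcap : cap_vertices v) (i : I) (u : 'rV[R]_d) (Hu : sphere u) :
  illuminates (cap_body v) (v i) u <->
  dotp (v i) u < - Num.sqrt (enorm (v i) ^+ 2 - 1).
Proof.
have vi_gt1 : 1 < enorm (v i) by rewrite ltNge; apply/negP; exact: Hcap.1 i.
split=> [illum|].
  rewrite ltNge; apply/negP => c_ge.
  have [m [m_gt0 m_le um_ge0]] := supporting_normal Hu vi_gt1 c_ge.
  exact: not_illuminates_halfspace (cap_body_le_dotp Hcap m_le) m_gt0 um_ge0 illum.
set c := dotp (v i) u; set q := v i - c *: u.
rewrite ltr_Nsqrt => [/andP[c_lt0 c2_gt]|]; last by nra.
have q2 := sqr_enorm_orthogonal (v i) Hu; rewrite -/c -/q in q2.
have q_lt1 : enorm q < 1 by have := enorm_ge0 q; nra.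
exists (- c / 2); first lra.
have -> : v i + (- c / 2) *: u = 2^-1 *: (v i + q).
  by apply/matrixP => k l; rewrite !mxE; field.
apply: interior_conv_midpoint Hu q_lt1; first by right; exists i.
by move=> x x_sphere; left.
Qed.
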